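(* Let $X\ge 1$. Let $\mathcal{Q}$ be a set of pairwise coprime positive integers with $\prod_{q \in \mathcal{Q}} q \ge X$. Let $P \subseteq \{1,\dots,X\}$ be an arithmetic progression of length at least $X^{3/4}$ whose common difference is coprime to all $q \in \mathcal{Q}$. Let $d, m \ge 1$ be integers with $(\max_{q \in \mathcal{Q}} q)^{dm} \le X^{1/16}$. Let $\Gamma := \pi_{\mathcal{Q}}(P)\subseteq G_{\mathcal{Q}}$. Let $f \in B(P)$ with $\mathbb{E}_{x\in P} |f(x)| = \alpha$, and let $g := \Psi_{P,\mathcal{Q}} f \in B(G_{\mathcal{Q}})$. Then \[ \mathbb{E}_{x\in\Gamma} |W_{d} g(x)|^{2m} \le \mathbb{E}_{x\in G_{\mathcal{Q}}} |W_{d} g(x)|^{2m} + \alpha^{2m} X^{-1/4}.\]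
   Context: $B(\Sigma)$ denotes the space of complex-valued functions on a finite set $\Sigma$. $G_{\mathcal{Q}} := \prod_{q\in\mathcal{Q}} \mathbb{Z}/q\mathbb{Z}\cong \mathbb{Z}/(\prod_{q\in\mathcal{Q}}q)\mathbb{Z}$, and $\pi_{\mathcal{Q}}:\mathbb{Z}\to G_{\mathcal{Q}}$ is the natural projection. Characters of $G_{\mathcal{Q}}$ are identified with $\xi=\sum_{q\in\mathcal{Q}}\xi_q/q\in\bigoplus_{q\in\mathcal{Q}}(\frac1q\mathbb{Z}/\mathbb{Z})$, acting by $x\mapsto e(\xi x)$ with $e(t)=e^{2\pi i t}$; $|\xi|$ denotes the number of $q$ with $\xi_q\not\equiv 0$. Fourier coefficients: $\widehat g(\xi)=\mathbb{E}_{x\in G_{\mathcal{Q}}} g(x)\overline{e(\xi x)}$. The level-$d$ operator is $W_d g(x)=\sum_{\xi:|\xi|=d}\widehat g(\xi)e(\xi x)$. The lift $\Psi_{P,\mathcal{Q}}:B(P)\to B(G_{\mathcal{Q}})$ is defined by $(\Psi_{P,\mathcal{Q}}f)(\pi_{\mathcal{Q}}(x))=|P|^{-1}|G_{\mathcal{Q}}|f(x)$ for $x\in P$ and $0$ off $\pi_{\mathcal{Q}}(P)$ (well-defined since $\pi_{\mathcal{Q}}$ is injective on $P$). *)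

From mathcomp Require Import all_boot all_algebra.
From mathcomp Require Import all_classical all_reals all_analysis.
From mathcomp Require Import complex.
Import GRing.Theory Num.Theory.
Local Open Scope ring_scope.

Section Defs.
Variable R : realType.
Local Notation C := R[i].

Definition ee (t : R) : C := (cos (2 * pi * t) +i* sin (2 * pi * t))%C.

Definition modc (z : C) : R := Normc.normc z.

Definition avg (s : seq nat) (h : nat -> R) : R :=
  (size s)%:R^-1 * \sum_(x <- s) h x.

(* Q is given as a duplicate-free list of moduli. *)
(* |G_Q| = prod_{q in Q} q; G_Q = Z/NZ, elements represented by 0..N-1 *)
Definition NQ (Q : seq nat) : nat := \prod_(q <- Q) q.
Definition piQ (Q : seq nat) (x : nat) : nat := x %% NQ Q.
Definition maxQ (Q : seq nat) : nat := \max_(q <- Q) q.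

Definition avgG (Q : seq nat) (h : nat -> R) : R := avg (iota 0 (NQ Q)) h.

(* characters xi = sum_q xi_q / q, with xi_q in {0,..,q-1}, indexed by
   positions i < size Q (the modulus being q_i = nth 1 Q i) *)
Definition charQ (Q : seq nat) := {ffun 'I_(size Q) -> 'I_(maxQ Q)}.
Definition is_charQ (Q : seq nat) (xi : charQ Q) : bool :=
  [forall i, (val (xi i) < nth 1 Q i)%N].
Definition char_wt (Q : seq nat) (xi : charQ Q) : nat :=
  #|[set i : 'I_(size Q) | ~~ (nth 1 Q i %| val (xi i))%N]|.
Definition char_val (Q : seq nat) (xi : charQ Q) (x : nat) : C :=
  ee (\sum_(i < size Q) ((val (xi i))%:R * x%:R / (nth 1 Q i)%:R)).

Definition fourier (Q : seq nat) (g : nat -> C) (xi : charQ Q) : C :=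
  (NQ Q)%:R^-1 * \sum_(x < NQ Q) g x * (char_val Q xi x)^*%C.

Definition Wd (Q : seq nat) (d : nat) (g : nat -> C) (x : nat) : C :=
  \sum_(xi : charQ Q | is_charQ Q xi && (char_wt Q xi == d)) fourier Q g xi * char_val Q xi x.

Definition AP (a r L : nat) : seq nat := [seq a + r * k | k <- iota 0 L].

Definition PsiPQ (P Q : seq nat) (f : nat -> C) (z : nat) : C :=
  let PP := map (piQ Q) P in
  if z \in PP then ((NQ Q)%:R / (size P)%:R)%:C%C * f (nth 0%N P (index z PP))
  else 0.

Definition GammaQ (P Q : seq nat) : seq nat := undup (map (piQ Q) P).

End Defs.

Arguments ee {R}.
Arguments modc {R}.
Arguments avg {R}.
Arguments avgG {R}.
Arguments char_val {R}.
Arguments fourier {R}.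
Arguments Wd {R}.
Arguments PsiPQ {R}.

From mathcomp Require Import all_boot all_algebra.
From mathcomp Require Import all_classical all_reals all_analysis.
From mathcomp Require Import complex.
From mathcomp Require Import ring lra zify.
Import order.Order.TTheory GRing.Theory Num.Theory.
Local Open Scope ring_scope.

Set Implicit Arguments.
Unset Strict Implicit.
Unset Printing Implicit Defensive.

(* Expanding |W_d g|^{2m} writes it as a combination, indexed by pairs of
   m-tuples of level-d characters, of characters x |-> e(θ x) of G_Q whose
   coefficients are bounded by α^{2m}, because |ĝ(ξ)| <= E_{x ∈ P} |f(x)|.
   Each such θ = Σ_q v_q / q involves at most 2dm moduli, whose product D is
   at most (max q)^{2dm}.  If θ is an integer, both averages equal 1.
   Otherwise the G_Q-average vanishes, while π_Q maps P injectively onto Γ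
   and the Γ-average is a geometric sum whose ratio is a D-th root of unity
   different from 1 (the difference of P is coprime to every q), hence is at
   most D / |P|.  With at most (max q)^{4dm} terms, the two averages differ
   by at most α^{2m} (max q)^{6dm} / |P| <= α^{2m} X^{6/16 - 12/16}. *)

Section RootsOfUnity.
Variable C : numDomainType.

Lemma sum_expr_modn (u : C) (D L : nat) : u ^+ D = 1 -> u != 1 ->
  \sum_(k < L) u ^+ k = \sum_(k < L %% D) u ^+ k.
Proof.
move=> uD u1; apply: (mulfI (_ : u - 1 != 0)); first by rewrite subr_eq0.
by rewrite -!subrX1 {1}(divn_eq L D) exprD mulnC exprM uD expr1n mul1r.
Qed.

Lemma sum_expr_eq0 (u : C) (D : nat) : u ^+ D = 1 -> u != 1 ->
  \sum_(k < D) u ^+ k = 0.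
Proof. by move=> uD u1; rewrite (sum_expr_modn D uD u1) modnn big_ord0. Qed.

Lemma norm_sum_expr_le (u : C) (D L : nat) : `|u| = 1 -> u ^+ D = 1 -> u != 1 ->
  (0 < D)%N -> `|\sum_(k < L) u ^+ k| <= D%:R.
Proof.
move=> u1 uD un1 D0; rewrite (sum_expr_modn L uD un1).
apply: (le_trans (ler_norm_sum _ _ _)).
rewrite (eq_bigr (fun _ => 1)) => [|k _]; last by rewrite normrX u1 expr1n.
by rewrite sumr_const card_ord ler_nat ltnW // ltn_pmod.
Qed.

End RootsOfUnity.

Section Complex.
Variable R : realType.
Local Notation C := R[i].

Lemma modcE (z : C) : (modc z)%:C%C = `|z|.
Proof. by case: z => a b; rewrite normc_def. Qed.

Lemma modc_ge0 (z : C) : 0 <= modc z.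
Proof. by have := normr_ge0 z; rewrite -modcE -[0 : C]/(0%:C)%C lecR. Qed.

Lemma normC_real (x : R) : `|x%:C%C| = (`|x|)%:C%C :> C.
Proof. by rewrite normc_def /= expr0n /= addr0 sqrtr_sqr. Qed.

Lemma ee0 : ee 0 = 1 :> C.
Proof. by rewrite /ee mulr0 cos0 sin0. Qed.

Lemma eeD (s t : R) : ee (s + t) = ee s * ee t :> C.
Proof.
rewrite /ee mulrDr cosD sinD; apply/eqP; rewrite eq_complex /=.
by rewrite !eqxx /= [sin _ * cos _]mulrC addrC eqxx.
Qed.

Lemma eeN (t : R) : ee (- t) = (ee t)^*%C :> C.
Proof. by rewrite /ee mulrN cosN sinN. Qed.

Lemma ee_sum (I : Type) (s : seq I) (t : I -> R) :
  ee (\sum_(k <- s) t k) = \prod_(k <- s) ee (t k) :> C.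
Proof. exact: (big_morph _ eeD ee0). Qed.

Lemma norm_ee (t : R) : `|ee t| = 1 :> C.
Proof. by rewrite normc_def /= cos2Dsin2 sqrtr1. Qed.

Lemma eeMn (t : R) (k : nat) : ee (t * k%:R) = ee t ^+ k :> C.
Proof.
elim: k => [|k IH]; first by rewrite mulr0 ee0 expr0.
by rewrite -natr1 mulrDr mulr1 eeD IH exprSr.
Qed.

Lemma ee_int (z : int) : ee z%:~R = 1 :> C.
Proof.
have ee_nat (k : nat) : ee k%:R = 1 :> C.
  rewrite /ee; have -> : 2 * pi * k%:R = (pi *+ 2) *+ k :> R by rewrite mulr_natr mulr_natl.
  rewrite -[_ *+ k]add0r (periodicn (@cosD2pi R)) (periodicn (@sinD2pi R)).
  by rewrite cos0 sin0.
case: z => k; first exact: ee_nat.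
by rewrite NegzE mulrNz eeN ee_nat conjc1.
Qed.

Lemma ee_ne1 (t : R) : 0 < t < 1 -> ee t != 1 :> C.
Proof.
move=> /andP[t0 t1]; apply/eqP => /eqP; rewrite eq_complex /= => /andP[/eqP c1 /eqP s0].
have pi0 := pi_gt0 R.
have [tl|tg|te] := ltgtP (2 * pi * t) pi.
- have : 0 < sin (2 * pi * t) by apply: sin_gt0_pi; rewrite tl andbT !mulr_gt0.
  by rewrite s0 ltxx.
- have : 0 < sin (2 * pi * t - pi).
    apply: sin_gt0_pi; rewrite subr_gt0 tg /= ltrBlDr.
    have : 2 * pi * t < 2 * pi * 1 by rewrite ltr_pM2l ?mulr_gt0.
    by lra.
  by rewrite sinB sinpi cospi s0 mul0r mulr0 subr0 ltxx.
- by move: c1; rewrite te cospi; lra.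
Qed.

Lemma ee_frac_ne1 (B : int) (D : nat) : (0 < D)%N -> ~~ (D%:Z %| B)%Z ->
  ee (B%:~R / D%:R) != 1 :> C.
Proof.
move=> D0 nBD; have D0' : (0 : R) < D%:R by rewrite ltr0n.
have -> : B%:~R / D%:R = (B %/ D)%Z%:~R + (B %% D)%Z%:~R / D%:R :> R.
  by rewrite {1}(divz_eq B D) rmorphD rmorphM /= mulrDl mulfK ?gt_eqF.
rewrite eeD ee_int mul1r; apply: ee_ne1.
have s0 : (B %% D)%Z != 0 by apply: contra nBD => /eqP/dvdz_mod0P.
have s_ge0 : 0 <= (B %% D)%Z by apply: modz_ge0; rewrite eqz_nat -lt0n.
have sD : ((B %% D)%Z < D)%R by apply: ltz_pmod; rewrite ltz_nat.
apply/andP; split; first by rewrite divr_gt0 // ltr0z lt_def s0.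
by rewrite ltr_pdivrMr // mul1r -[D%:R]/((D%:Z)%:~R) ltr_int.
Qed.

End Complex.

Section Averages.
Variable R : realType.
Local Notation C := R[i].

Definition cavg (s : seq nat) (h : nat -> C) : C :=
  (size s)%:R^-1 * \sum_(x <- s) h x.

Lemma avg_complex s (h : nat -> R) :
  (avg s h)%:C%C = cavg s (fun x => (h x)%:C%C).
Proof. by rewrite /avg /cavg rmorphM fmorphV /= rmorph_nat rmorph_sum. Qed.

Lemma avg_modc_ge0 s (h : nat -> C) : 0 <= avg s (fun x => modc (h x)).
Proof. by rewrite mulr_ge0 ?invr_ge0 ?sumr_ge0 // => x _; apply: modc_ge0. Qed.

Lemma cavg_sum (J : finType) (P : pred J) s (F : J -> nat -> C) :
  cavg s (fun x => \sum_(j | P j) F j x) = \sum_(j | P j) cavg s (F j).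
Proof. by rewrite /cavg exchange_big mulr_sumr. Qed.

Lemma cavgZ s c (h : nat -> C) : cavg s (fun x => c * h x) = c * cavg s h.
Proof. by rewrite /cavg -mulr_sumr mulrCA. Qed.

Lemma cavg_iota N (h : nat -> C) :
  cavg (iota 0 N) h = N%:R^-1 * \sum_(x < N) h x.
Proof. by rewrite /cavg size_iota -(big_mkord xpredT) /index_iota subn0. Qed.

Lemma cavg_AP a r L (h : nat -> C) :
  cavg (AP a r L) h = L%:R^-1 * \sum_(k < L) h (a + r * k)%N.
Proof.
rewrite /cavg size_map big_map; exact: (cavg_iota L (fun k => h (a + r * k)%N)).
Qed.

End Averages.

Section Support.
Variable I : finType.

Definition supp (v : I -> int) : {set I} := [set i | v i != 0].

Lemma card_supp_sub (v w : I -> int) :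
  (#|supp (fun i => (v i - w i)%R)| <= #|supp v| + #|supp w|)%N.
Proof.
apply: leq_trans (leq_card_setU _ _).1; apply: subset_leq_card.
apply/fintype.subsetP => i; rewrite !inE; apply: contraR; rewrite negb_or !negbK.
by case/andP => /eqP -> /eqP ->; rewrite subr0.
Qed.

Lemma card_supp_sum (J : Type) (s : seq J) (F : J -> I -> int) :
  (#|supp (fun i => (\sum_(k <- s) F k i)%R)| <= \sum_(k <- s) #|supp (F k)|)%N.
Proof.
elim: s => [|k s IH].
  by rewrite big_nil leqn0 cards_eq0; apply/eqP/setP => i; rewrite !inE big_nil eqxx.
rewrite big_cons; apply: leq_trans (leq_add (leqnn _) IH).
apply: leq_trans (leq_card_setU _ _).1; apply: subset_leq_card.
apply/fintype.subsetP => i; rewrite !inE big_cons; apply: contraR; rewrite negb_or !negbK.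
by case/andP => /eqP -> /eqP ->; rewrite addr0.
Qed.

End Support.

Section Frequencies.
Variables (R : realType) (I : finType) (q : I -> nat).
Local Notation C := R[i].

Definition frac_den (T : {set I}) : nat := \prod_(i in T) q i.

Definition frac_num (T : {set I}) (v : I -> int) : int :=
  \sum_(i in T) v i * (\prod_(l in T | l != i) q l)%:Z.

Definition freq (v : I -> int) : R := \sum_i (v i)%:~R / (q i)%:R.

Definition echar (v : I -> int) (x : nat) : C := ee (freq v * x%:R).

Lemma freq_sum (J : Type) (s : seq J) (F : J -> I -> int) :
  freq (fun i => \sum_(k <- s) F k i) = \sum_(k <- s) freq (F k).
Proof.
rewrite /freq exchange_big /=; apply: eq_bigr => i _.
by rewrite rmorph_sum mulr_suml.
Qed.

Lemma echar_sum (J : Type) (s : seq J) (F : J -> I -> int) x :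
  echar (fun i => \sum_(k <- s) F k i) x = \prod_(k <- s) echar (F k) x.
Proof. by rewrite /echar freq_sum mulr_suml ee_sum. Qed.

Lemma echar_sub (v w : I -> int) x :
  echar (fun i => v i - w i) x = echar v x * (echar w x)^*%C.
Proof.
rewrite /echar /freq -eeN -eeD -mulNr -mulrDl -sumrN -big_split /=.
by congr (ee (_ * _)); apply: eq_bigr => i _; rewrite rmorphB /= mulrBl.
Qed.

Lemma echar_exp v x : echar v x = ee (freq v) ^+ x.
Proof. exact: eeMn. Qed.

Hypothesis q_gt0 : forall i, (0 < q i)%N.
Hypothesis q_coprime : forall i j, i != j -> coprime (q i) (q j).

Lemma frac_den_gt0 (T : {set I}) : (0 < frac_den T)%N.
Proof. exact: prodn_gt0. Qed.

Lemma frac_den_le (T : {set I}) B :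
  (forall i, q i <= B)%N -> (frac_den T <= B ^ #|T|)%N.
Proof. by move=> qB; rewrite -prod_nat_const; apply: leq_prod. Qed.

Lemma frac_denD1 (T : {set I}) i : i \in T ->
  frac_den T = (q i * \prod_(l in T | l != i) q l)%N.
Proof. by move=> iT; rewrite /frac_den (bigD1 i). Qed.

(* Reducing [frac_num T v] modulo [q j] kills every term but [v j] times a
   unit. *)
Lemma dvdz_frac_num (T : {set I}) v j : j \in T ->
  ((frac_den T)%:Z %| frac_num T v)%Z -> ((q j)%:Z %| v j)%Z.
Proof.
move=> jT den_num.
have : ((q j)%:Z %| frac_num T v)%Z.
  by apply: dvdz_trans den_num; rewrite (frac_denD1 jT) PoszM dvdz_mulr.
rewrite /frac_num (bigD1 j) //= rpredDr; last first.
  apply: rpred_sum => i /andP[iT ij]; apply: dvdz_mull.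
  by rewrite (bigD1 j) /= ?jT 1?eq_sym // PoszM dvdz_mulr.
rewrite Gauss_dvdzl // coprimezE /=.
apply: (big_ind (coprime (q j))) => [|x y|i /andP[_ ij]].
- exact: coprimen1.
- by rewrite coprimeMr => ->.
- by apply: q_coprime; rewrite eq_sym.
Qed.

Lemma freq_frac (T : {set I}) v : (forall i, i \notin T -> v i = 0) ->
  freq v = (frac_num T v)%:~R / (frac_den T)%:R.
Proof.
move=> vT; rewrite /freq (bigID (mem T)) /= [X in _ + X]big1 ?addr0; last first.
  by move=> i /vT ->; rewrite mul0r.
rewrite /frac_num rmorph_sum /= mulr_suml; apply: eq_bigr => i iT.
have cof_neq0 : (\prod_(l in T | l != i) q l)%:R != 0 :> R.
  by rewrite pnatr_eq0 -lt0n prodn_gt0.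
rewrite rmorphM /= (frac_denD1 iT) natrM invfM mulrACA -[_%:Z%:~R]/(_%:R).
by rewrite mulfV // mulr1.
Qed.

Lemma ee_freq_den (T : {set I}) v : (forall i, i \notin T -> v i = 0) ->
  ee (freq v) ^+ frac_den T = 1 :> C.
Proof.
move=> vT; rewrite -eeMn (freq_frac vT) mulfVK ?ee_int //.
by rewrite pnatr_eq0 -lt0n frac_den_gt0.
Qed.

Lemma ee_freq_ne1 v (c : nat) j : (forall i, coprime c (q i)) ->
  ~~ ((q j)%:Z %| v j)%Z -> ee (freq v) ^+ c != 1 :> C.
Proof.
move=> cq nvj; have vT i : i \notin supp v -> v i = 0 by rewrite inE negbK => /eqP.
rewrite -eeMn (freq_frac vT) mulrAC -[c%:R]/(c%:Z%:~R) -rmorphM.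
apply: ee_frac_ne1; first exact: frac_den_gt0.
apply: contra nvj => den_num.
have [jT|/vT ->] := boolP (j \in supp v); last exact: dvdz0.
rewrite -(@Gauss_dvdzl _ _ c%:Z); last by rewrite coprimezE /= coprime_sym.
apply: (dvdz_frac_num (v := fun i => v i * c%:Z)) jT _.
by rewrite /frac_num mulr_suml in den_num *; under eq_bigr do rewrite mulrAC.
Qed.

Lemma echar_dvd v x : (forall i, ((q i)%:Z %| v i)%Z) -> echar v x = 1.
Proof.
move=> qv; rewrite /echar /freq.
have -> : \sum_i (v i)%:~R / (q i)%:R = (\sum_i (v i %/ (q i)%:Z)%Z)%:~R :> R.
  rewrite rmorph_sum; apply: eq_bigr => i _.
  by rewrite -{1}(divzK (qv i)) rmorphM /= mulfK // pnatr_eq0 -lt0n.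
by rewrite -[x%:R]/(x%:Z%:~R) -rmorphM ee_int.
Qed.

Local Notation N := (frac_den [set: I]).

Lemma echar_modn v x : echar v (x %% N) = echar v x.
Proof.
rewrite !echar_exp {2}(divn_eq x N) exprD mulnC exprM.
by rewrite ee_freq_den ?expr1n ?mul1r // => i; rewrite inE.
Qed.

Lemma sum_echar_eq0 v j : ~~ ((q j)%:Z %| v j)%Z -> \sum_(x < N) echar v x = 0.
Proof.
move=> nvj; under eq_bigr do rewrite echar_exp.
apply: sum_expr_eq0; first by rewrite ee_freq_den // => i; rewrite inE.
by rewrite -[ee _]expr1 (ee_freq_ne1 (c := 1) _ nvj) // => i; exact: coprime1n.
Qed.

(* Along a progression with difference [r] the character is a geometric sum
   with ratio [ee (freq v) ^+ r], a root of unity of order dividing the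
   denominator and different from [1] as [r] is coprime to every [q i]. *)
Lemma norm_sum_echar_AP_le v j a r L : (forall i, coprime r (q i)) ->
  ~~ ((q j)%:Z %| v j)%Z ->
  `|\sum_(k < L) echar v (a + r * k)| <= (frac_den (supp v))%:R.
Proof.
move=> rq nvj; have vT i : i \notin supp v -> v i = 0 by rewrite inE negbK => /eqP.
under eq_bigr do rewrite echar_exp exprD exprM.
rewrite -mulr_sumr normrM normrX norm_ee expr1n mul1r.
apply: norm_sum_expr_le; last exact: frac_den_gt0.
- by rewrite normrX norm_ee expr1n.
- by rewrite -exprM mulnC exprM ee_freq_den // expr1n.
- exact: ee_freq_ne1 rq nvj.
Qed.

Lemma cavg_echar_AP_sub_le v a r L K B : (forall i, coprime r (q i)) ->
  (forall i, q i <= B)%N -> (0 < L)%N -> (#|supp v| <= K)%N ->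
  `|cavg (AP a r L) (echar v) - cavg (iota 0 N) (echar v)| <= (B ^ K)%:R / L%:R.
Proof.
move=> rq qB L_gt0 vK; rewrite cavg_AP cavg_iota.
have [/forallP qv|/forallPn[j nvj]] := boolP [forall i, ((q i)%:Z %| v i)%Z].
  have echar1 x : echar v x = 1 by exact: echar_dvd.
  under eq_bigr do rewrite echar1; under [in X in _ - X]eq_bigr do rewrite echar1.
  rewrite !sumr_const !card_ord !mulVf ?subrr ?normr0 ?divr_ge0 //.
  - by rewrite pnatr_eq0 -lt0n frac_den_gt0.
  - by rewrite pnatr_eq0 -lt0n.
rewrite (sum_echar_eq0 nvj) mulr0 subr0 normrM ger0_norm ?invr_ge0 // mulrC.
rewrite ler_wpM2r ?invr_ge0 //.
apply: le_trans; first exact: norm_sum_echar_AP_le rq nvj.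
rewrite ler_nat; apply: leq_trans (frac_den_le _ qB) _.
by apply: leq_pexp2l vK; apply: leq_trans (q_gt0 j) (qB j).
Qed.

End Frequencies.

Arguments freq {R I} q v.
Arguments echar {R I} q v x.

Section Moduli.
Variable Q : seq nat.

Definition qmod (i : 'I_(size Q)) : nat := nth 1 Q i.

Lemma qmod_le_maxQ i : (qmod i <= maxQ Q)%N.
Proof. exact/(leq_bigmax_seq _ (mem_nth 1 (ltn_ord i))). Qed.

Hypothesis Qpos : all (fun q => (0 < q)%N) Q.

Lemma qmod_gt0 i : (0 < qmod i)%N.
Proof. exact: (all_nthP 1 Qpos). Qed.

Lemma NQ_frac_den : NQ Q = frac_den qmod [set: _].
Proof. by rewrite /NQ (big_nth 1) big_mkord; apply: eq_bigl => i; rewrite inE. Qed.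

Lemma NQ_gt0 : (0 < NQ Q)%N.
Proof. by rewrite NQ_frac_den frac_den_gt0 //; exact: qmod_gt0. Qed.

Lemma size_le_maxQ : uniq Q -> (size Q <= maxQ Q)%N.
Proof.
move=> Quniq; rewrite -(size_iota 1 (maxQ Q)); apply: uniq_leq_size => // x xQ.
by rewrite mem_iota (allP Qpos x xQ) add1n ltnS (leq_bigmax_seq _ xQ).
Qed.

Hypothesis Qcop : pairwise coprime Q.

Lemma qmod_coprime i j : i != j -> coprime (qmod i) (qmod j).
Proof.
move=> ij; have /pairwiseP Qc := Qcop.
have [lt|gt|eq] := ltngtP i j.
- by apply: Qc; rewrite ?inE ?ltn_ord.
- by rewrite coprime_sym; apply: Qc; rewrite ?inE ?ltn_ord.
- by move: ij; rewrite (val_inj eq) eqxx.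
Qed.

End Moduli.

Arguments qmod : clear implicits.

Section LevelCharacters.
Variables (Q : seq nat) (d : nat).
Local Notation n := (size Q).
Local Notation M := (maxQ Q).

Definition level_char : pred (charQ Q) :=
  fun xi => is_charQ Q xi && (char_wt Q xi == d).

Definition char_vec (xi : charQ Q) : 'I_n -> int := fun i => (val (xi i))%:Z.

Lemma char_val_echar (R : realType) xi x :
  char_val Q xi x = echar (R := R) (qmod Q) (char_vec xi) x.
Proof.
rewrite /char_val /echar /freq mulr_suml.
by congr ee; apply: eq_bigr => i _; rewrite mulrAC.
Qed.

Lemma supp_char_vec xi : level_char xi -> #|supp (char_vec xi)| = d.
Proof.
case/andP => /forallP xi_lt /eqP <-; apply: eq_card => i; rewrite !inE eqz_nat.
have [->|xi0] := eqVneq (val (xi i)) 0%N; first by rewrite dvdn0.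
by apply/esym/negP => /(dvdn_leq _); rewrite lt0n xi0 leqNgt xi_lt => /(_ isT).
Qed.

(* A level-[d] character is determined by the list of the [d] pairs
   (position, value) on its support, whence [M ^ (2 * d)] as [n <= M]. *)
Definition char_graph (xi : charQ Q) : seq ('I_n * 'I_M) :=
  [seq (i, xi i) | i <- enum (supp (char_vec xi))].

Lemma size_char_graph xi : level_char xi -> size (char_graph xi) = d.
Proof. by move=> xi_d; rewrite size_map -cardE supp_char_vec. Qed.

Lemma char_graph_inj : injective char_graph.
Proof.
have graph_val y1 y2 i : char_graph y1 = char_graph y2 ->
    i \in supp (char_vec y1) -> y1 i = y2 i.
  move=> E iS; have : (i, y1 i) \in char_graph y2 by rewrite -E map_f ?mem_enum.
  by case/mapP => j _ [-> ->].
move=> x1 x2 E; apply/ffunP => i.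
have [iS1|iS1] := boolP (i \in supp (char_vec x1)); first exact: graph_val.
have [iS2|iS2] := boolP (i \in supp (char_vec x2)); first exact/esym/graph_val.
move: iS1 iS2; rewrite !inE !negbK !eqz_nat => /eqP x1i /eqP x2i.
by apply: val_inj; rewrite /= x1i x2i.
Qed.

Lemma card_level_char : uniq Q -> all (fun q => (0 < q)%N) Q -> (0 < d)%N ->
  (#|level_char| <= M ^ (2 * d))%N.
Proof.
move=> Quniq Qpos d_gt0.
have [xi0 xi0_d|/eq_card0 ->] := pickP level_char; last exact: leq0n.
have : (0 < #|supp (char_vec xi0)|)%N by rewrite supp_char_vec.
case/card_gt0P => i0 _; pose z0 := (i0, xi0 i0).
pose enc xi : d.-tuple ('I_n * 'I_M) := [tuple nth z0 (char_graph xi) j | j < d].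
have enc_inj : {in level_char &, injective enc}.
  move=> y1 y2 y1_d y2_d E; apply: char_graph_inj; apply: (@eq_from_nth _ z0).
    by rewrite !size_char_graph.
  move=> j; rewrite size_char_graph // => jd.
  by have := congr1 (fun t => tnth t (Ordinal jd)) E; rewrite !tnth_mktuple.
rewrite -(card_in_imset enc_inj); apply: leq_trans (max_card _) _.
rewrite card_tuple card_prod !card_ord expnM leq_exp2r // -mulnn leq_mul2r.
by rewrite size_le_maxQ ?orbT.
Qed.

Variables (R : realType) (m : nat) (g : nat -> R[i]).
Local Notation tuples := (ffun_on level_char).

Definition tuple_vec (phi : {ffun 'I_m -> charQ Q}) : 'I_n -> int :=
  fun i => \sum_(k < m) char_vec (phi k) i.

Definition tuple_coef (phi : {ffun 'I_m -> charQ Q}) : R[i] :=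
  \prod_(k < m) fourier Q g (phi k).

Lemma card_supp_tuple_vec phi :
  phi \in tuples -> (#|supp (tuple_vec phi)| <= m * d)%N.
Proof.
move=> /ffun_onP phi_d; apply: leq_trans (card_supp_sum _ _) _.
rewrite (eq_bigr (fun _ => d)) => [|k _]; last exact: supp_char_vec (phi_d k).
by rewrite sum_nat_const card_ord.
Qed.

Lemma Wd_exp x : Wd Q d g x ^+ m =
  \sum_(phi in tuples) tuple_coef phi * echar (qmod Q) (tuple_vec phi) x.
Proof.
rewrite -[m in LHS]card_ord -prodr_const /Wd.
under eq_bigr do under eq_bigr do rewrite (char_val_echar R).
rewrite (bigA_distr_big level_char).
apply: eq_bigr => phi _; rewrite big_split /=; congr (_ * _).
by rewrite /tuple_vec echar_sum.
Qed.

Lemma modc_Wd_exp x : (modc (Wd Q d g x) ^+ (2 * m))%:C%C =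
  \sum_(phi1 in tuples) \sum_(phi2 in tuples) tuple_coef phi1 * (tuple_coef phi2)^*%C *
    echar (qmod Q) (fun i => tuple_vec phi1 i - tuple_vec phi2 i) x.
Proof.
rewrite rmorphXn /= modcE exprM sqr_normc exprMn -rmorphXn /= Wd_exp.
rewrite rmorph_sum /= big_distrlr /=; apply: eq_bigr => phi1 _.
by apply: eq_bigr => phi2 _; rewrite echar_sub rmorphM /= mulrACA.
Qed.

Lemma cavg_modc_Wd_exp s :
  cavg s (fun x => (modc (Wd Q d g x) ^+ (2 * m))%:C%C) =
  \sum_(phi1 in tuples) \sum_(phi2 in tuples) tuple_coef phi1 * (tuple_coef phi2)^*%C *
    cavg s (echar (qmod Q) (fun i => tuple_vec phi1 i - tuple_vec phi2 i)).
Proof.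
rewrite (funext modc_Wd_exp) cavg_sum; apply: eq_bigr => phi1 _.
by rewrite cavg_sum; apply: eq_bigr => phi2 _; rewrite cavgZ.
Qed.

End LevelCharacters.

Arguments level_char : clear implicits.

Section Lift.
Variables (R : realType) (Q : seq nat) (a r L : nat) (f : nat -> R[i]).
Hypotheses (a_gt0 : (0 < a)%N) (r_gt0 : (0 < r)%N) (L_gt0 : (0 < L)%N).
Hypothesis AP_le_NQ : (a + r * L.-1 <= NQ Q)%N.
Local Notation N := (NQ Q).
Local Notation P := (AP a r L).
Local Notation PP := (map (piQ Q) (AP a r L)).

Lemma size_AP : size P = L.
Proof. by rewrite size_map size_iota. Qed.

Lemma AP_range x : x \in P -> (0 < x <= N)%N.
Proof.
case/mapP => k; rewrite mem_iota add0n => /andP[_ kL] ->.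
rewrite (leq_trans a_gt0 (leq_addr _ _)) /=; apply: leq_trans AP_le_NQ.
by rewrite leq_add2l leq_mul2l -ltnS prednK // kL orbT.
Qed.

(* [piQ] is injective on [1, N], which contains the progression. *)
Lemma uniq_piQ_AP : uniq PP.
Proof.
rewrite map_inj_in_uniq => [|x y xP yP]; last first.
  have /andP[x_gt0 xN] := AP_range xP; have /andP[y_gt0 yN] := AP_range yP.
  rewrite /piQ; case: (x =P N) => [->|/eqP xnN]; case: (y =P N) => [->|/eqP ynN].
  - by [].
  - by rewrite modnn modn_small ?ltn_neqAle ?ynN //; lia.
  - by rewrite modnn modn_small ?ltn_neqAle ?xnN //; lia.
  - by rewrite !modn_small ?ltn_neqAle ?xnN ?ynN.
rewrite map_inj_uniq ?iota_uniq // => k1 k2 /eqP.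
by rewrite eqn_add2l eqn_mul2l eqn0Ngt r_gt0 => /eqP.
Qed.

Lemma avg_GammaQ (F : nat -> R) : (forall x, F (piQ Q x) = F x) ->
  avg (GammaQ P Q) F = avg P F.
Proof.
move=> F_per; rewrite /avg /GammaQ undup_id ?uniq_piQ_AP // size_map big_map.
by under eq_bigr do rewrite F_per.
Qed.

Hypothesis Qpos : all (fun q => (0 < q)%N) Q.

Lemma sum_norm_PsiPQ :
  \sum_(x < N) `|PsiPQ P Q f x| = N%:R / L%:R * \sum_(x <- P) `|f x|.
Proof.
rewrite -(big_mkord xpredT (fun x => `|PsiPQ P Q f x|)) /index_iota subn0.
rewrite (bigID (mem PP)) /=.
rewrite [X in _ + X]big1 ?addr0 => [|x xPP]; last by rewrite /PsiPQ (negbTE xPP) normr0.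
rewrite -big_filter (perm_big PP); last first.
  apply: uniq_perm; rewrite ?filter_uniq ?iota_uniq ?uniq_piQ_AP // => x.
  rewrite mem_filter mem_iota andb_idr // => /mapP[y _ ->].
  by rewrite /piQ ltn_pmod ?NQ_gt0.
rewrite [LHS](big_nth 0%N) [in RHS](big_nth 0%N) !size_map size_iota !big_mkord mulr_sumr.
apply: eq_bigr => k _; rewrite /PsiPQ mem_nth ?size_map ?size_iota //.
rewrite index_uniq ?size_map ?size_iota ?uniq_piQ_AP // normrM ger0_norm.
  by rewrite rmorphM fmorphV /= !rmorph_nat.
by rewrite -[0 : R[i]]/(0%:C)%C lecR divr_ge0.
Qed.

Lemma norm_fourier_PsiPQ_le xi :
  `|fourier Q (PsiPQ P Q f) xi| <= (avg P (fun x => modc (f x)))%:C%C.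
Proof.
rewrite /fourier normrM ger0_norm ?invr_ge0 //.
apply: le_trans (ler_wpM2l _ (ler_norm_sum _ _ _)) _; first by rewrite invr_ge0.
under eq_bigr do rewrite normrM normcJ /char_val norm_ee mulr1.
rewrite sum_norm_PsiPQ mulrA mulKf ?pnatr_eq0 -?lt0n ?NQ_gt0 //.
rewrite avg_complex /cavg size_AP; under [X in _ <= _ * X]eq_bigr do rewrite modcE.
by [].
Qed.

End Lift.

Lemma expr6_div_le_powR (R : realType) (X B : R) (L : nat) : 1 <= X -> 0 <= B ->
  B <= X `^ (1 / 16) -> X `^ (3 / 4) <= L%:R -> B ^+ 6 / L%:R <= X `^ (- (1 / 4)).
Proof.
move=> X1 B_ge0 BX LX; set y := X `^ (1 / 16) in BX.
have y1 : 1 <= y by rewrite -(powRr0 X); apply: ler_powR; lra.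
have y_gt0 : 0 < y by apply: lt_le_trans y1.
have Xy k : X `^ (k%:R / 16) = y ^+ k.
  by rewrite -powR_mulrn ?ltW // -powRrM; congr (_ `^ _); lra.
have y12L : y ^+ 12 <= L%:R by rewrite -Xy; have -> : 12%:R / 16 = 3 / 4 :> R by lra.
have -> : X `^ (- (1 / 4)) = (y ^+ 4)^-1.
  by rewrite powRN -Xy; have -> : 4%:R / 16 = 1 / 4 :> R by lra.
have L_gt0 : 0 < L%:R :> R by apply: lt_le_trans y12L; rewrite exprn_gt0.
rewrite ler_pdivrMr //; apply: (@le_trans _ _ (y ^+ 8)).
  apply: (@le_trans _ _ (y ^+ 6)); first by apply: lerXn2r; rewrite ?nnegrE ?(ltW y_gt0).
  exact: ler_weXn2l.
rewrite -[y ^+ 8](mulKf (_ : y ^+ 4 != 0)) ?expf_neq0 ?gt_eqF // -exprD.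
by apply: ler_wpM2l; rewrite ?invr_ge0 ?exprn_ge0 ?(ltW y_gt0).
Qed.

Section Estimate.
Variables (R : realType) (Q : seq nat) (a r L d m : nat) (f : nat -> R[i]).
Hypotheses (Quniq : uniq Q) (Qpos : all (fun q => (0 < q)%N) Q).
Hypothesis Qcop : pairwise coprime Q.
Hypotheses (a_gt0 : (0 < a)%N) (r_gt0 : (0 < r)%N) (L_gt0 : (0 < L)%N).
Hypothesis d_gt0 : (0 < d)%N.
Hypothesis AP_le_NQ : (a + r * L.-1 <= NQ Q)%N.
Hypothesis r_coprime : all (coprime r) Q.
Local Notation P := (AP a r L).
Local Notation g := (PsiPQ P Q f).
Local Notation alpha := (avg P (fun x => modc (f x))).
Local Notation M := (maxQ Q).
Local Notation tuples := (ffun_on (level_char Q d) : pred {ffun 'I_m -> charQ Q}).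
Local Notation F := (fun x => modc (Wd Q d g x) ^+ (2 * m)).

Lemma Wd_modNQ x : Wd Q d g (x %% NQ Q) = Wd Q d g x.
Proof.
apply: eq_bigr => xi _; rewrite !(char_val_echar R) NQ_frac_den.
by rewrite (echar_modn _ (qmod_gt0 Qpos)).
Qed.

Lemma card_tuples_le : (#|tuples| <= M ^ (2 * (d * m)))%N.
Proof.
rewrite card_ffun_on card_ord mulnA expnM.
by elim: m => // k IH; rewrite !expnS leq_mul // card_level_char.
Qed.

Lemma norm_tuple_coef_le (phi : {ffun 'I_m -> charQ Q}) :
  `|tuple_coef g phi| <= alpha%:C%C ^+ m.
Proof.
rewrite normr_prod -[m in _ ^+ m]card_ord -prodr_const.
by apply: ler_prod => k _; rewrite normr_ge0 norm_fourier_PsiPQ_le.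
Qed.

Lemma norm_tuple_term_le (phi1 phi2 : {ffun 'I_m -> charQ Q}) :
  phi1 \in tuples -> phi2 \in tuples ->
  `|tuple_coef g phi1 * (tuple_coef g phi2)^*%C *
     (cavg P (echar (qmod Q) (fun i => tuple_vec phi1 i - tuple_vec phi2 i))
      - cavg (iota 0 (NQ Q)) (echar (qmod Q) (fun i => tuple_vec phi1 i - tuple_vec phi2 i)))|
  <= (alpha ^+ (2 * m) * (M ^ (2 * (d * m)))%:R / L%:R)%:C%C.
Proof.
move=> phi1T phi2T; rewrite -[alpha ^+ _ * _ / _]mulrA rmorphM normrM.
apply: ler_pM; rewrite ?normr_ge0 //.
  rewrite normrM normcJ mul2n -addnn exprD rmorphM.
  by apply: ler_pM; rewrite ?normr_ge0 ?rmorphXn ?norm_tuple_coef_le.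
rewrite fmorph_div /= !rmorph_nat NQ_frac_den; apply: cavg_echar_AP_sub_le.
- exact: qmod_gt0.
- exact: qmod_coprime.
- by move=> i; apply: (all_nthP 1 r_coprime).
- exact: qmod_le_maxQ.
- exact: L_gt0.
- apply: leq_trans (card_supp_sub _ _) _.
  have := leq_add (card_supp_tuple_vec phi1T) (card_supp_tuple_vec phi2T); lia.
Qed.

Lemma avg_GammaQ_sub_avgG_le :
  `|avg (GammaQ P Q) F - avgG Q F|
    <= alpha ^+ (2 * m) * ((M ^ (d * m)) ^ 6)%:R / L%:R.
Proof.
rewrite avg_GammaQ // => [|x]; last by rewrite /piQ Wd_modNQ.
set T := alpha ^+ (2 * m) * (M ^ (2 * (d * m)))%:R / L%:R.
have sum_le : `|avg P F - avgG Q F| <= T *+ (#|tuples| * #|tuples|).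
  rewrite -lecR -normC_real rmorphB /= /avgG !avg_complex !cavg_modc_Wd_exp.
  rewrite -sumrB rmorphMn mulrnA -sumr_const.
  apply: le_trans (ler_norm_sum _ _ _) _; apply: ler_sum => phi1 phi1T.
  rewrite -sumrB; apply: le_trans (ler_norm_sum _ _ _) _; rewrite -sumr_const.
  by apply: ler_sum => phi2 phi2T; rewrite -mulrBr norm_tuple_term_le.
apply: le_trans sum_le _.
have -> : T *+ (#|tuples| * #|tuples|) =
    alpha ^+ (2 * m) * ((#|tuples| * #|tuples| * M ^ (2 * (d * m)))%:R / L%:R).
  by rewrite /T -mulr_natr !natrM; ring.
rewrite -mulrA; apply: ler_wpM2l; first exact/exprn_ge0/avg_modc_ge0.
apply: ler_wpM2r; rewrite ?invr_ge0 // ler_nat.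
have -> : ((M ^ (d * m)) ^ 6
    = M ^ (2 * (d * m)) * M ^ (2 * (d * m)) * M ^ (2 * (d * m)))%N.
  by rewrite -!expnD -expnM; congr (_ ^ _)%N; lia.
by do 2?apply: leq_mul; rewrite ?card_tuples_le.
Qed.

End Estimate.

Theorem lemma3p4 (R : realType) (X : R) (Q : seq nat) (a r L d m : nat)
    (f : nat -> R[i]) (alpha : R) :
  1 <= X ->
  uniq Q -> all (fun q => (0 < q)%N) Q -> pairwise coprime Q ->
  X <= (NQ Q)%:R ->
  (1 <= a)%N -> (1 <= r)%N -> (1 <= L)%N ->
  (a + r * L.-1)%:R <= X ->
  X `^ (3 / 4) <= L%:R ->
  all (coprime r) Q ->
  (1 <= d)%N -> (1 <= m)%N ->
  ((maxQ Q) ^ (d * m))%:R <= X `^ (1 / 16) ->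
  alpha = avg (AP a r L) (fun x => modc (f x)) ->
  let g := PsiPQ (AP a r L) Q f in
  avg (GammaQ (AP a r L) Q) (fun x => modc (Wd Q d g x) ^+ (2 * m))
    <= avgG Q (fun x => modc (Wd Q d g x) ^+ (2 * m))
       + alpha ^+ (2 * m) * X `^ (- (1 / 4)).
Proof.
move=> X1 Quniq Qpos Qcop XNQ a_gt0 r_gt0 L_gt0 APX LX r_coprime d_gt0 _ MX ->.
cbv zeta.
have AP_le_NQ : (a + r * L.-1 <= NQ Q)%N.
  by rewrite -(ler_nat R); apply: le_trans APX XNQ.
rewrite -lerBlDl; apply: le_trans (ler_norm _) _.
apply: le_trans (avg_GammaQ_sub_avgG_le m f Quniq Qpos Qcop a_gt0 r_gt0 L_gt0 d_gt0
  AP_le_NQ r_coprime) _.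
rewrite -mulrA natrX; apply: ler_wpM2l; first exact/exprn_ge0/avg_modc_ge0.
exact: expr6_div_le_powR.
Qed.
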